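(* Let $q>1$, let $V=\bigoplus_iV_i$ be a finite-dimensional graded $\mathbb Q_\ell$-vector space and $F$ a semisimple degree-zero linear map on $V$ such that: (i) every eigenvalue of $F$ on $V_i$ (in $\overline{\mathbb Q}_\ell\cong\mathbb C$) has absolute value $q^{i/2}$; (ii) there is a Laurent polynomial $Q_V(t)=\sum_ia_it^i$ such that for all $k\ge0$ the supertrace of $F^k$ on $V$ equals $Q_V(q^k)=\sum_ia_iq^{ki}$. Then $V_{2i+1}=0$ for all $i$, $F$ acts on $V_{2i}$ as multiplication by $q^i$, and $\operatorname{Tr}_{F^k}(V)=Q_V(q^k)=P_V(q^{k/2})$, where $P_V(t)=\sum_i\dim V_i\,t^i$ is the Poincaré polynomial of $V$.
   Context: The supertrace of $F^k$ is $\sum_i(-1)^i\operatorname{Tr}(F^k|_{V_i})$. In the paper $q$ is a power of a prime. *)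

From HB Require Import structures.
From mathcomp Require Import all_boot all_order all_algebra.
Set Implicit Arguments. Unset Strict Implicit. Unset Printing Implicit Defensive.
Import Order.TTheory GRing.Theory Num.Theory.
Local Open Scope ring_scope.

(* A graded finite-dimensional vector space V = (+)_j V_(g j), j : 'I_n,
   with graded pieces of dimension d j and grade g j := m + j (an integer);
   a degree-zero endomorphism F is a family of square blocks F j : 'M_(d j). *)

Definition grade (m : int) (n : nat) (j : 'I_n) : int := m + (j : nat)%:Z.

Definition supertrace (C : numClosedFieldType) (m : int) (n : nat)
  (d : 'I_n -> nat) (F : forall j : 'I_n, 'M[C]_(d j)) (k : nat) : C :=
  \sum_(j < n) (-1) ^ (grade m j) * \tr (F j ^+ k).

Definition laurent_eval (C : numClosedFieldType) (m0 : int) (l : nat)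
  (a : 'I_l -> C) (t : C) : C :=
  \sum_(i < l) a i * t ^ (m0 + (i : nat)%:Z).

Definition poincare_eval (C : numClosedFieldType) (m : int) (n : nat)
  (d : 'I_n -> nat) (t : C) : C :=
  \sum_(j < n) (d j)%:R * t ^ (grade m j).

(* Diagonalising each block, the supertrace of F^k is a signed sum of k-th
   powers of eigenvalues, and by hypothesis it equals sum_i a_i (q^i)^k for all
   k.  Geometric sequences with distinct ratios are linearly independent, so the
   total coefficient of every ratio agrees on both sides.  An eigenvalue lambda
   of F on V_j has absolute value q^(j/2), different from those of the other
   blocks, so its coefficient (-1)^j mult(lambda) on the left is nonzero; hence
   lambda = q^i for some i, and comparing absolute values gives j = 2i. *)

From HB Require Import structures.
From mathcomp Require Import all_boot all_order all_algebra.
Import Order.TTheory GRing.Theory Num.Theory.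
Local Open Scope ring_scope.

Lemma power_sums_coef_eq0 {F : fieldType} {I : finType} (c x : I -> F) :
  (forall k, \sum_i c i * x i ^+ k = 0) -> forall v, \sum_(i | x i == v) c i = 0.
Proof.
move=> sum_eq0 v.
(* Combining the power sums with the coefficients of p isolates the weight of v. *)
pose p := \prod_(i | x i != v) ('X - (x i)%:P).
have pv_neq0 : p.[v] != 0.
  by rewrite horner_prod; apply/prodf_neq0 => i xiv; rewrite hornerXsubC subr_eq0 eq_sym.
have : \sum_i c i * p.[x i] = 0.
  under eq_bigr do rewrite horner_coef big_distrr /=.
  rewrite exchange_big big1 // => j _.
  by under eq_bigr do rewrite mulrCA; rewrite -big_distrr /= sum_eq0 mulr0.
rewrite (bigID (fun i => x i == v)) /= [X in _ + X]big1 ?addr0; last first.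
  by move=> i xiv; rewrite horner_prod (bigD1 i) //= hornerXsubC subrr mul0r mulr0.
rewrite (eq_bigr (fun i => c i * p.[v])) => [|i /eqP -> //].
by rewrite -big_distrl /= => /eqP; rewrite mulf_eq0 (negPf pv_neq0) orbF => /eqP.
Qed.

Lemma eq_power_sums_coef {F : fieldType} {I J : finType}
    {c x : I -> F} {b y : J -> F} :
  (forall k, \sum_i c i * x i ^+ k = \sum_j b j * y j ^+ k) ->
  forall v, \sum_(i | x i == v) c i = \sum_(j | y j == v) b j.
Proof.
move=> eq_sums v; apply/eqP; rewrite -subr_eq0; apply/eqP.
pose c' u := match u with inl i => c i | inr j => - b j end.
pose x' u := match u with inl i => x i | inr j => y j end.
have := power_sums_coef_eq0 c' x' _ v.
rewrite big_sumType /= sumrN; apply => k.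
by rewrite big_sumType /=; under [X in _ + X]eq_bigr do rewrite mulNr; rewrite sumrN eq_sums subrr.
Qed.

Lemma conjmx_exp (F : fieldType) (n : nat) (V A : 'M[F]_n) (k : nat) :
  V \in unitmx -> conjmx V (A ^+ k) = conjmx V A ^+ k.
Proof.
move=> V_unit; elim: k => [|k IHk].
  by rewrite !expr0 conjmx_scalar ?row_free_unit.
by rewrite !exprS -!mulmxE conjmxM ?inE ?stablemx_unit // IHk.
Qed.

Lemma diag_mx_exp (R : pzRingType) (n : nat) (D : 'rV[R]_n) (k : nat) :
  diag_mx D ^+ k = diag_mx (\row_i D 0 i ^+ k).
Proof.
elim: k => [|k IHk].
  by rewrite expr0 -[1]/(1%:M) -diag_const_mx; congr diag_mx; apply/rowP => i; rewrite !mxE.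
by rewrite exprS IHk -mulmxE mulmx_diag; congr diag_mx; apply/rowP => i; rewrite !mxE exprS.
Qed.

Lemma eigenvalue_diag_mx (F : fieldType) (n : nat) (D : 'rV[F]_n) (i : 'I_n) :
  eigenvalue (diag_mx D) (D 0 i).
Proof.
apply/eigenvalueP; exists (delta_mx 0 i); first by rewrite -rowE row_diag_mx.
by apply/negP => /eqP/matrixP/(_ 0 i)/eqP; rewrite !mxE !eqxx oner_eq0.
Qed.

Lemma diagonalizable_spectrum {F : fieldType} {n : nat} {A : 'M[F]_n} :
  diagonalizable A -> {D : 'rV_n | similar_in unitmx A (diag_mx D)}.
Proof.
case/sig2W => P P_unit /diag_mxP/sig_eqW[D PAD].
by exists D; exists P => //; rewrite /similar_to PAD inE.
Qed.

Section Spectrum.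
Context {F : fieldType} {n : nat} {A : 'M[F]_n} {D : 'rV[F]_n}.
Hypothesis A_sim_D : similar_in unitmx A (diag_mx D).

Lemma mxtrace_exp_spectrum (k : nat) : \tr (A ^+ k) = \sum_i D 0 i ^+ k.
Proof.
case: A_sim_D => P P_unit /eqP PAD.
rewrite -[A ^+ k](conjmxK _ P_unit) conjVmx // mxtrace_mulC mulmxA mulmxV //.
rewrite mul1mx conjmx_exp // PAD diag_mx_exp mxtrace_diag.
by apply: eq_bigr => i _; rewrite mxE.
Qed.

Lemma eigenvalue_spectrum (i : 'I_n) : eigenvalue A (D 0 i).
Proof.
case: A_sim_D => P P_unit /eqP PAD.
have P_free : row_free P by rewrite row_free_unit.
apply: (eigenvalue_conjmx (stablemx_unit A P_unit) P_free).
rewrite PAD; exact: eigenvalue_diag_mx.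
Qed.

Lemma spectrum_const_scalar (a : F) : (forall i, D 0 i = a) -> A = a%:M.
Proof.
move=> Da; case: A_sim_D => P P_unit /eqP PAD.
have Dconst : diag_mx D = a%:M.
  by rewrite -diag_const_mx; congr diag_mx; apply/rowP => i; rewrite !mxE.
by rewrite -(conjmxK A P_unit) PAD Dconst conjmx_scalar // row_free_unit unitmx_inv.
Qed.

End Spectrum.

Lemma exprz_gt1_inj {R : numFieldType} {x : R} : 1 < x -> injective (exprz x).
Proof.
move=> x_gt1; have x_neq0 : x != 0 by rewrite gt_eqF // (lt_trans ltr01).
suff le_inj e1 e2 : e1 <= e2 -> x ^ e1 = x ^ e2 -> e1 = e2.
  by move=> e1 e2; case: (lerP e1 e2) => [/le_inj//|/ltW le21 /esym/le_inj->].
move=> le12; have [k ->] : exists k : nat, e2 = e1 + k.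
  by exists `|e2 - e1|%N; rewrite gez0_abs ?subr_ge0 // addrCA subrr addr0.
case: k => [|k]; first by rewrite addr0.
rewrite expfzDr // -[X in X = _]mulr1 => /(mulfI (expfz_neq0 _ x_neq0)) /esym/eqP.
by rewrite gt_eqF // exprn_egt1.
Qed.

Lemma exprz_sqrtC (C : numClosedFieldType) (x : C) (e : int) :
  0 <= x -> x ^ e = sqrtC x ^ (2 * e).
Proof. by move=> x_ge0; rewrite -exprz_exp [sqrtC x ^ 2]sqrtCK. Qed.

Section SpectralSupertrace.
Context {C : numClosedFieldType} {q : C} {m : int} {n : nat} {d : 'I_n -> nat}.
Context {D : forall j : 'I_n, 'rV[C]_(d j)} {m0 : int} {l : nat} {a : 'I_l -> C}.
Hypothesis q_gt1 : 1 < q.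
Hypothesis norm_spectrum : forall j r, `|D j 0 r| = sqrtC q ^ grade m j.
Hypothesis spectral_supertrace : forall k : nat,
  \sum_(j < n) (-1) ^ grade m j * \sum_r D j 0 r ^+ k = laurent_eval m0 a (q ^+ k).

Let q_ge0 : 0 <= q. Proof. exact: le_trans ler01 (ltW q_gt1). Qed.

Let sqrtC_q_gt1 : 1 < sqrtC q.
Proof. by rewrite -sqrtC1 ltr_sqrtC // qualifE /= ler01. Qed.

Lemma eq_spectrum_block j j' r r' : D j 0 r = D j' 0 r' -> j = j'.
Proof.
move/(congr1 Num.norm); rewrite !norm_spectrum => /(exprz_gt1_inj sqrtC_q_gt1)/addrI.
by case=> /val_inj.
Qed.

Lemma spectrum_laurent_exponent j r : exists i : 'I_l, D j 0 r = q ^ (m0 + i).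
Proof.
pose c (p : {j : 'I_n & 'I_(d j)}) := (-1) ^ grade m (tag p) : C.
pose x (p : {j : 'I_n & 'I_(d j)}) := D (tag p) 0 (tagged p).
have power_sums (k : nat) :
    \sum_p c p * x p ^+ k = \sum_i a i * (q ^ (m0 + (i : nat)%:Z)) ^+ k.
  have -> : \sum_p c p * x p ^+ k = \sum_j \sum_r (-1) ^ grade m j * D j 0 r ^+ k.
    by rewrite sig_big_dep.
  transitivity (laurent_eval m0 a (q ^+ k)).
    by rewrite -spectral_supertrace; apply: eq_bigr => j' _; rewrite big_distrr.
  by apply: eq_bigr => i _; rewrite (exprzAC q k).
have weight_neq0 : \sum_(p | x p == D j 0 r) c p != 0.
  have -> : \sum_(p | x p == D j 0 r) c p =
      \sum_j' \sum_(r' | D j' 0 r' == D j 0 r) (-1) ^ grade m j'.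
    by rewrite sig_big_dep.
  rewrite (bigD1 j) //= [X in _ + X]big1 ?addr0 => [|j' j'_neq_j]; last first.
    by apply: big1 => r' /eqP/eq_spectrum_block j'_eq_j; rewrite j'_eq_j eqxx in j'_neq_j.
  rewrite sumr_const mulrn_eq0 negb_or expfz_eq0 oppr_eq0 oner_eq0 andbF andbT -lt0n.
  by apply/card_gt0P; exists r; exact: eqxx.
rewrite (eq_power_sums_coef power_sums (D j 0 r)) in weight_neq0.
have [i /eqP <- | no_i] := pickP (fun i : 'I_l => q ^ (m0 + i) == D j 0 r); first by exists i.
by rewrite big_pred0 ?eqxx in weight_neq0.
Qed.

Lemma spectrum_even_grade j r : exists2 e, grade m j = 2 * e & D j 0 r = q ^ e.
Proof.
have [i Dq] := spectrum_laurent_exponent j r; exists (m0 + i) => //.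
apply: (exprz_gt1_inj sqrtC_q_gt1).
by rewrite -(norm_spectrum j r) -exprz_sqrtC // Dq ger0_norm // exprz_ge0.
Qed.

Lemma spectrum_odd_grade_dim0 j : odd `|grade m j| -> d j = 0%N.
Proof.
case: (posnP (d j)) => // d_gt0; have [e -> _] := spectrum_even_grade j (Ordinal d_gt0).
by rewrite abszM oddM.
Qed.

Lemma spectrum_even_grade_const j (i : int) :
  grade m j = 2 * i -> forall r, D j 0 r = q ^ i.
Proof.
move=> grade_j r; have [e grade_e ->] := spectrum_even_grade j r.
by congr (_ ^ _); apply: (@mulfI _ 2) => //; rewrite -grade_e.
Qed.

End SpectralSupertrace.

Lemma supertrace_eq_poincare (C : numClosedFieldType) (q : C) (m : int) (n : nat)
    (d : 'I_n -> nat) (F : forall j : 'I_n, 'M[C]_(d j)) :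
  0 <= q ->
  (forall j, odd `|grade m j| -> d j = 0%N) ->
  (forall j (i : int), grade m j = 2 * i -> F j = (q ^ i)%:M) ->
  forall k, supertrace m F k = poincare_eval m d (sqrtC q ^+ k).
Proof.
move=> q_ge0 odd_dim0 even_scalar k; apply: eq_bigr => j _.
have [odd_j | even_j] := boolP (odd `|grade m j|).
  rewrite [\tr _]big1 ?mulr0 ?odd_dim0 ?mul0r // => -[r r_lt] _.
  by exfalso; rewrite odd_dim0 in r_lt.
have [i grade_j] : exists i, grade m j = 2 * i.
  by exists (grade m j %/ 2)%Z; rewrite mulrC divzK // dvdzE dvdn2.
have sign_j : (-1 : C) ^ (2 * i) = 1 by rewrite -exprz_exp [(-1) ^ 2]sqrrN expr1n exp1rz.
rewrite (even_scalar j i grade_j) grade_j sign_j -rmorphXn mxtrace_scalar mul1r mulr_natl.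
by rewrite (exprzAC (sqrtC q) k) -exprz_sqrtC.
Qed.

Theorem lemma3p4 (C : numClosedFieldType) (q : C) (m : int) (n : nat)
  (d : 'I_n -> nat) (F : forall j : 'I_n, 'M[C]_(d j))
  (m0 : int) (l : nat) (a : 'I_l -> C) :
  1 < q ->
  (forall j : 'I_n, diagonalizable (F j)) ->
  (forall (j : 'I_n) (x : C), eigenvalue (F j) x ->
      `|x| = sqrtC q ^ (grade m j)) ->
  (forall k : nat, @supertrace C m n d F k = @laurent_eval C m0 l a (q ^+ k)) ->
  [/\ (forall j : 'I_n, odd `|grade m j|%N -> d j = 0%N),
      (forall (j : 'I_n) (i : int), grade m j = 2 * i ->
          F j = (q ^ i)%:M) &
      (forall k : nat,
          @supertrace C m n d F k = @laurent_eval C m0 l a (q ^+ k) /\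
          @laurent_eval C m0 l a (q ^+ k) = @poincare_eval C m n d (sqrtC q ^+ k))].
Proof.
move=> q_gt1 F_diag F_norm F_supertrace.
have [D F_sim_D] := all_sig (fun j => diagonalizable_spectrum (F_diag j)).
have norm_D j r : `|D j 0 r| = sqrtC q ^ grade m j.
  exact/F_norm/eigenvalue_spectrum/F_sim_D.
have supertrace_D k :
    \sum_(j < n) (-1) ^ grade m j * \sum_r D j 0 r ^+ k = laurent_eval m0 a (q ^+ k).
  by rewrite -F_supertrace; apply: eq_bigr => j _; rewrite (mxtrace_exp_spectrum (F_sim_D j)).
have odd_dim0 := spectrum_odd_grade_dim0 q_gt1 norm_D supertrace_D.
have even_scalar j i (grade_j : grade m j = 2 * i) : F j = (q ^ i)%:M.
  apply: (spectrum_const_scalar (F_sim_D j)).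
  exact: spectrum_even_grade_const q_gt1 norm_D supertrace_D _ _ grade_j.
split=> // k; split=> //; rewrite -F_supertrace.
by apply: supertrace_eq_poincare => //; apply: ltW (lt_trans ltr01 q_gt1).
Qed.
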